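(* Let $f\colon M^n\to\mathbb{S}^{n+m}$ be an isometric immersion, $x\in M^n$, and $k$ an integer with $2\leq k\leq n/2$, and assume that $\mathrm{Ric}_M(X)\geq b(n,k,H(x))$ for every unit $X\in T_xM$, where $b(n,k,H)=\frac{n(k-1)}{k}+\frac{n(k-1)H}{2k^2}\big(nH+\sqrt{n^2H^2+4k(n-k)}\big)$. Let $$\lambda(n,k,H)=\frac{1}{2k}\big(nH+\sqrt{n^2H^2+4k(n-k)}\big),\qquad \mu(n,k,H)=\frac{1}{2k}\big(n(2k-1)H-\sqrt{n^2H^2+4k(n-k)}\big).$$ Then: (i) If $H(x)\neq 0$, the shape operator $A_1$ of $f$ at $x$ in the direction $\xi_1=\mathcal H(x)/H(x)$ satisfies $\mu(n,k,H(x))\leq\langle A_1X,X\rangle\leq\lambda(n,k,H(x))$ for every unit $X\in T_xM$. (ii) If $H(x)=0$, then for every unit normal vector $\xi\in N_fM(x)$ the shape operator $A_\xi$ satisfies $\mu(n,k,0)\leq\langle A_\xi X,X\rangle\leq\lambda(n,k,0)$ for every unit $X\in T_xM$.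
   Context: $\mathbb{S}^{n+m}$ is the unit sphere; $\mathcal H=\frac1n\mathrm{tr}\,\alpha_f$ is the normalized mean curvature vector of $f$ ($\alpha_f$ its second fundamental form), $H=\|\mathcal H\|$, $A_\xi$ the shape operator in the normal direction $\xi$, and $\mathrm{Ric}_M(X)$ the non-normalized Ricci curvature in the unit direction $X$. *)

From HB Require Import structures.
From mathcomp Require Import all_boot all_order all_algebra.
From mathcomp Require Import reals.
Set Implicit Arguments. Unset Strict Implicit. Unset Printing Implicit Defensive.
Import Order.TTheory GRing.Theory Num.Theory.
Local Open Scope ring_scope.

(* Pointwise model of an isometric immersion f : M^n -> S^{n+m} at a point x:
   T_xM is identified with 'rV_n via an orthonormal frame e_0..e_{n-1},
   N_fM(x) with 'rV_m via an orthonormal normal frame.  The second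
   fundamental form alpha_f at x is given by its (symmetric) values
   alpha i j = alpha_f(e_i, e_j) in the normal space. *)

Section Defs.
Variable R : realType.

Definition dotv (p : nat) (u v : 'rV[R]_p) : R := (u *m v^T) 0 0.

Definition unitv (p : nat) (u : 'rV[R]_p) : Prop := dotv u u = 1.

Definition basisv (n : nat) (i : 'I_n) : 'rV[R]_n := \row_j (i == j)%:R.

Definition sff (n m : nat) (alpha : 'I_n -> 'I_n -> 'rV[R]_m)
  (X Y : 'rV[R]_n) : 'rV[R]_m :=
  \sum_(i < n) \sum_(j < n) (X 0 i * Y 0 j) *: alpha i j.

Definition meancurv (n m : nat) (alpha : 'I_n -> 'I_n -> 'rV[R]_m) : 'rV[R]_m :=
  n%:R^-1 *: \sum_(i < n) alpha i i.

Definition Hnorm (n m : nat) (alpha : 'I_n -> 'I_n -> 'rV[R]_m) : R :=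
  Num.sqrt (dotv (meancurv alpha) (meancurv alpha)).

(* shape operator A_xi, as a matrix in the frame: <A_xi e_i, e_j> = <alpha(e_i,e_j), xi> *)
Definition shapeop (n m : nat) (alpha : 'I_n -> 'I_n -> 'rV[R]_m) (xi : 'rV[R]_m)
  : 'M[R]_n := \matrix_(i, j) dotv (alpha i j) xi.

(* Riemann curvature tensor of M at x given by the Gauss equation for
   submanifolds of the unit sphere (ambient curvature 1):
   R(X,Y,Z,W) = <X,W><Y,Z> - <X,Z><Y,W> + <alpha(X,W),alpha(Y,Z)> - <alpha(X,Z),alpha(Y,W)> *)
Definition curv4 (n m : nat) (alpha : 'I_n -> 'I_n -> 'rV[R]_m)
  (X Y Z W : 'rV[R]_n) : R :=
  dotv X W * dotv Y Z - dotv X Z * dotv Y W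
  + dotv (sff alpha X W) (sff alpha Y Z) - dotv (sff alpha X Z) (sff alpha Y W).

(* non-normalized Ricci curvature Ric_M(X) = sum_i R(X,e_i,e_i,X) *)
Definition Ric (n m : nat) (alpha : 'I_n -> 'I_n -> 'rV[R]_m) (X : 'rV[R]_n) : R :=
  \sum_(i < n) curv4 alpha X (basisv i) (basisv i) X.

Definition sqrtD (n k : nat) (H : R) : R :=
  Num.sqrt (n%:R ^+ 2 * H ^+ 2 + 4 * k%:R * (n%:R - k%:R)).

Definition bnk (n k : nat) (H : R) : R :=
  n%:R * (k%:R - 1) / k%:R
  + n%:R * (k%:R - 1) * H / (2 * k%:R ^+ 2) * (n%:R * H + sqrtD n k H).

Definition lambdank (n k : nat) (H : R) : R :=
  (2 * k%:R)^-1 * (n%:R * H + sqrtD n k H).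

Definition munk (n k : nat) (H : R) : R :=
  (2 * k%:R)^-1 * (n%:R * (2 * k%:R - 1) * H - sqrtD n k H).

End Defs.

(* Let a := <A_xi X, X> for unit X and unit xi, where xi is the direction of
   the mean curvature vector (any unit normal if H = 0), so that
   tr alpha_f = n H xi.  The Gauss equation gives
   Ric(X) = (n - 1) + n H a - sum_i |alpha_f(X, e_i)|^2, and Cauchy-Schwarz,
   applied twice, bounds the last sum below by a^2.  Since lambda + mu = n H
   and lambda mu = b - (n - 1), the hypothesis Ric(X) >= b then becomes
   (a - lambda) (a - mu) <= 0.  Finally mu <= lambda: otherwise every diagonal
   entry of A_xi would be at least lambda > H, whereas they sum to n H. *)

From mathcomp Require Import all_boot all_order all_algebra.
From mathcomp Require Import reals.
From mathcomp Require Import ring lra.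
Import Order.TTheory GRing.Theory Num.Theory.
Set Implicit Arguments. Unset Strict Implicit.
Local Open Scope ring_scope.

Section Roots.
Variables (R : realType) (n k : nat) (h : R).
Hypothesis k_gt0 : (0 < k)%N.

Lemma sqrtD_sqr : (k <= n)%N ->
  sqrtD n k h ^+ 2 = n%:R ^+ 2 * h ^+ 2 + 4 * k%:R * (n%:R - k%:R).
Proof.
move=> kn; have knR : k%:R <= n%:R :> R by rewrite ler_nat.
by rewrite /sqrtD sqr_sqrtr // addr_ge0 ?(mulr_ge0 (sqr_ge0 _) (sqr_ge0 _))
  // mulr_ge0 ?subr_ge0 // mulr_ge0 ?ler0n.
Qed.

Lemma lambdank_add_munk : lambdank n k h + munk n k h = n%:R * h.
Proof. by rewrite /lambdank /munk; field; rewrite pnatr_eq0 -lt0n. Qed.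

Lemma lambdank_mul_munk : (k <= n)%N ->
  lambdank n k h * munk n k h = bnk n k h - (n%:R - 1).
Proof.
move=> kn; have S2 := sqrtD_sqr kn.
rewrite /lambdank /munk /bnk; move: S2.
set S := sqrtD n k h; set K := k%:R; set N := n%:R => S2.
have K0 : K != 0 by rewrite pnatr_eq0 -lt0n.
have K4 : 4 * K ^+ 2 != 0 by rewrite mulf_neq0 ?expf_neq0 // pnatr_eq0.
apply: (mulfI K4).
transitivity ((N * h + S) * (N * (2 * K - 1) * h - S)); first by field.
transitivity (4 * K * N * (K - 1) + 2 * N * (K - 1) * h * (N * h + S)
              - 4 * K ^+ 2 * (N - 1)); last by field.
have -> : (N * h + S) * (N * (2 * K - 1) * h - S)
        = N ^+ 2 * (2 * K - 1) * h ^+ 2 + N * (2 * K - 2) * h * S - S ^+ 2 by ring.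
by rewrite S2; ring.
Qed.

Lemma lt_lambdank : (2 * k <= n)%N -> 0 <= h -> h < lambdank n k h.
Proof.
move=> kn h_ge0; have kR : 0 < k%:R :> R by rewrite ltr0n.
have knR : 2 * k%:R <= n%:R :> R by rewrite -natrM ler_nat.
have S_gt0 : 0 < sqrtD n k h.
  by rewrite sqrtr_gt0 ltr_wpDl ?(mulr_ge0 (sqr_ge0 _) (sqr_ge0 _))
    // mulr_gt0 //; lra.
have : 0 <= (n%:R - 2 * k%:R) * h by rewrite mulr_ge0 // subr_ge0.
rewrite /lambdank ltr_pdivlMl; lra.
Qed.

Lemma sub_lambdank_mul_sub_munk_le0 (a : R) : (k <= n)%N ->
  bnk n k h <= n%:R - 1 + n%:R * h * a - a ^+ 2 ->
  (a - lambdank n k h) * (a - munk n k h) <= 0.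
Proof.
move=> kn hb.
have -> : (a - lambdank n k h) * (a - munk n k h) =
  a ^+ 2 - (lambdank n k h + munk n k h) * a + lambdank n k h * munk n k h by ring.
rewrite lambdank_add_munk lambdank_mul_munk //; lra.
Qed.

End Roots.

Section DotProduct.
Variables (R : realType) (p : nat).
Implicit Types (u v : 'rV[R]_p).

Lemma dotvE u v : dotv u v = \sum_i u 0 i * v 0 i.
Proof. by rewrite /dotv mxE; apply: eq_bigr => i _; rewrite mxE. Qed.

Lemma dotvC u v : dotv u v = dotv v u.
Proof. by rewrite !dotvE; apply: eq_bigr => i _; rewrite mulrC. Qed.

Lemma dotv_ge0 u : 0 <= dotv u u.
Proof. by rewrite dotvE sumr_ge0 // => i _; rewrite -expr2 sqr_ge0. Qed.

Lemma dotv_eq0 u : (dotv u u == 0) = (u == 0).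
Proof.
apply/idP/eqP => [|->]; last by rewrite dotvE big1 // => i _; rewrite mxE mul0r.
rewrite dotvE psumr_eq0 => [/allP u0|i _]; last by rewrite -expr2 sqr_ge0.
apply/rowP => i; rewrite mxE; apply/eqP.
by have /implyP := u0 i (mem_index_enum i); rewrite mulf_eq0 orbb; apply.
Qed.

Lemma dotv_suml I (r : seq I) (P : pred I) (F : I -> 'rV[R]_p) v :
  dotv (\sum_(i <- r | P i) F i) v = \sum_(i <- r | P i) dotv (F i) v.
Proof. by rewrite /dotv mulmx_suml summxE. Qed.

Lemma dotv_sumr I (r : seq I) (P : pred I) (F : I -> 'rV[R]_p) v :
  dotv v (\sum_(i <- r | P i) F i) = \sum_(i <- r | P i) dotv v (F i).
Proof. by rewrite dotvC dotv_suml; apply: eq_bigr => i _; rewrite dotvC. Qed.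

Lemma dotvZl a u v : dotv (a *: u) v = a * dotv u v.
Proof. by rewrite /dotv -scalemxAl mxE. Qed.

Lemma dotvZr a u v : dotv u (a *: v) = a * dotv u v.
Proof. by rewrite dotvC dotvZl dotvC. Qed.

Lemma basisvE (i : 'I_p) : basisv R i = 'e_i.
Proof. by apply/rowP => j; rewrite !mxE eqxx eq_sym. Qed.

Lemma dotv_basisr u i : dotv u (basisv R i) = u 0 i.
Proof. by rewrite /dotv basisvE trmx_delta -colE mxE. Qed.

Lemma unitv_basis (i : 'I_p) : unitv (basisv R i).
Proof. by rewrite /unitv dotv_basisr mxE eqxx. Qed.

Lemma sum_deltaZ (V : lmodType R) (F : 'I_p -> V) i :
  \sum_j (i == j)%:R *: F j = F i.
Proof.
rewrite (bigD1 i) //= eqxx scale1r big1 ?addr0 // => j.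
by rewrite eq_sym => /negPf->; rewrite scale0r.
Qed.

Lemma sqr_dotv_le_unit u v : unitv v -> dotv u v ^+ 2 <= dotv u u.
Proof.
rewrite /unitv => v1; set t := dotv u v.
have : 0 <= dotv (u - t *: v) (u - t *: v) by apply: dotv_ge0.
have -> : dotv (u - t *: v) (u - t *: v) = dotv u u - 2 * t * dotv u v + t ^+ 2 * dotv v v.
  rewrite !dotvE !mulr_sumr -!sumrB -big_split; apply: eq_bigr => i _ /=.
  by rewrite !mxE; ring.
rewrite v1 -/t; lra.
Qed.

End DotProduct.

Section SecondFundamentalForm.
Variables (R : realType) (n m : nat) (alpha : 'I_n -> 'I_n -> 'rV[R]_m).
Implicit Types (X Y : 'rV[R]_n) (xi : 'rV[R]_m).

Lemma sff_basisr X j : sff alpha X (basisv R j) = \sum_i X 0 i *: alpha i j.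
Proof.
apply: eq_bigr => i _; rewrite -(sum_deltaZ (alpha i) j) scaler_sumr.
by apply: eq_bigr => l _; rewrite scalerA !mxE.
Qed.

Lemma sff_basis i j : sff alpha (basisv R i) (basisv R j) = alpha i j.
Proof.
rewrite sff_basisr -(sum_deltaZ (alpha^~ j) i).
by apply: eq_bigr => l _; rewrite mxE.
Qed.

Lemma dotv_sff_basisr X xi j :
  dotv (sff alpha X (basisv R j)) xi = (X *m shapeop alpha xi) 0 j.
Proof.
rewrite sff_basisr dotv_suml !mxE; apply: eq_bigr => i _.
by rewrite dotvZl mxE.
Qed.

Lemma dotv_shapeop X xi :
  dotv (X *m shapeop alpha xi) X = dotv (sff alpha X X) xi.
Proof.
rewrite dotvE dotv_suml; under [RHS]eq_bigr do rewrite dotv_suml.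
rewrite exchange_big; apply: eq_bigr => j _.
rewrite mxE mulr_suml; apply: eq_bigr => i _.
by rewrite dotvZl !mxE mulrAC.
Qed.

Lemma sum_diag_sff : (0 < n)%N -> \sum_i alpha i i = n%:R *: meancurv alpha.
Proof. by move=> n_gt0; rewrite scalerA mulfV ?scale1r // pnatr_eq0 -lt0n. Qed.

Lemma Hnorm_sqr : Hnorm alpha ^+ 2 = dotv (meancurv alpha) (meancurv alpha).
Proof. by rewrite sqr_sqrtr // dotv_ge0. Qed.

Lemma meancurv_eq0 : Hnorm alpha = 0 -> meancurv alpha = 0.
Proof. by move=> H0; apply/eqP; rewrite -dotv_eq0 -Hnorm_sqr H0 expr0n. Qed.

Lemma unitv_meancurv_dir : Hnorm alpha != 0 ->
  unitv ((Hnorm alpha)^-1 *: meancurv alpha).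
Proof.
move=> H0; rewrite /unitv dotvZl dotvZr -Hnorm_sqr.
by rewrite mulrA -expr2 exprVn mulVf // expf_neq0.
Qed.

End SecondFundamentalForm.

Section GaussEquation.
Variables (R : realType) (n m : nat) (alpha : 'I_n -> 'I_n -> 'rV[R]_m).
Hypothesis alpha_sym : forall i j, alpha i j = alpha j i.
Implicit Types (X Y : 'rV[R]_n) (xi : 'rV[R]_m).

Lemma sffC X Y : sff alpha X Y = sff alpha Y X.
Proof.
rewrite /sff exchange_big; apply: eq_bigr => i _; apply: eq_bigr => j _.
by rewrite alpha_sym mulrC.
Qed.

Lemma Ric_unitE X : unitv X ->
  Ric alpha X = n%:R - 1 + dotv (sff alpha X X) (\sum_i alpha i i)
    - \sum_i dotv (sff alpha X (basisv R i)) (sff alpha X (basisv R i)).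
Proof.
move=> X1; rewrite /Ric /curv4 sumrB big_split sumrB /= dotv_sumr.
congr (_ + _ - _).
- under eq_bigr do rewrite X1 unitv_basis mulr1.
  under [X in _ - X]eq_bigr do rewrite dotv_basisr dotvC dotv_basisr.
  by rewrite sumr_const card_ord -dotvE X1.
- by apply: eq_bigr => i _; rewrite sff_basis.
- by apply: eq_bigr => i _; rewrite (sffC (basisv R i)).
Qed.

Lemma Ric_le_shapeop X xi : unitv X -> unitv xi ->
  Ric alpha X <= n%:R - 1 + dotv (sff alpha X X) (\sum_i alpha i i)
                 - dotv (X *m shapeop alpha xi) X ^+ 2.
Proof.
move=> X1 xi1; rewrite Ric_unitE // lerB //.
apply: le_trans (sqr_dotv_le_unit _ X1) _; rewrite dotvE; apply: ler_sum => j _.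
by rewrite -dotv_sff_basisr -expr2 sqr_dotv_le_unit.
Qed.

Lemma shapeop_form_between k (h : R) xi :
  (0 < k)%N -> (2 * k <= n)%N -> 0 <= h -> unitv xi ->
  \sum_i alpha i i = (n%:R * h) *: xi ->
  (forall X, unitv X -> bnk n k h <= Ric alpha X) ->
  forall X, unitv X ->
    munk n k h <= dotv (X *m shapeop alpha xi) X
    /\ dotv (X *m shapeop alpha xi) X <= lambdank n k h.
Proof.
move=> k_gt0 kn h_ge0 xi1 tr_alpha hRic.
have kn' : (k <= n)%N by apply: leq_trans kn; rewrite leq_pmull.
have between X : unitv X ->
    (dotv (X *m shapeop alpha xi) X - lambdank n k h)
    * (dotv (X *m shapeop alpha xi) X - munk n k h) <= 0.
  move=> X1; apply: sub_lambdank_mul_sub_munk_le0 => //.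
  apply: le_trans (hRic X X1) _; apply: le_trans (Ric_le_shapeop X1 xi1) _.
  by rewrite tr_alpha dotvZr -dotv_shapeop.
have trace : \sum_i dotv (basisv R i *m shapeop alpha xi) (basisv R i) = n%:R * h.
  under eq_bigr do rewrite dotv_shapeop sff_basis.
  by rewrite -dotv_suml tr_alpha dotvZl xi1 mulr1.
have mu_le_lambda : munk n k h <= lambdank n k h.
  rewrite leNgt; apply/negP => lt_lm.
  have : \sum_(i < n) lambdank n k h <= n%:R * h.
    rewrite -trace; apply: ler_sum => i _.
    by have := between _ (unitv_basis R i); nra.
  rewrite sumr_const card_ord -mulr_natl.
  have := lt_lambdank k_gt0 kn h_ge0.
  have : 0 < n%:R :> R by rewrite ltr0n (leq_trans k_gt0).
  nra.
by move=> X X1; have := between X X1; split; nra.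
Qed.

End GaussEquation.

Theorem lemma6 (R : realType) (n m k : nat)
  (alpha : 'I_n -> 'I_n -> 'rV[R]_m)
  (alpha_sym : forall i j, alpha i j = alpha j i)
  (hk2 : (2 <= k)%N) (hkn : (2 * k <= n)%N)
  (hRic : forall X : 'rV[R]_n, unitv X ->
     bnk n k (Hnorm alpha) <= Ric alpha X) :
  (Hnorm alpha != 0 ->
     forall X : 'rV[R]_n, unitv X ->
       munk n k (Hnorm alpha)
         <= dotv (X *m shapeop alpha ((Hnorm alpha)^-1 *: meancurv alpha)) X
       /\ dotv (X *m shapeop alpha ((Hnorm alpha)^-1 *: meancurv alpha)) X
         <= lambdank n k (Hnorm alpha))
  /\
  (Hnorm alpha = 0 ->
     forall (xi : 'rV[R]_m), unitv xi ->
     forall X : 'rV[R]_n, unitv X ->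
       munk n k 0 <= dotv (X *m shapeop alpha xi) X
       /\ dotv (X *m shapeop alpha xi) X <= lambdank n k 0).
Proof.
have k_gt0 : (0 < k)%N by apply: leq_trans hk2.
have n_gt0 : (0 < n)%N by rewrite (leq_trans _ hkn) // muln_gt0.
have tr_alpha := sum_diag_sff alpha n_gt0.
have H_ge0 : 0 <= Hnorm alpha by apply: sqrtr_ge0.
split => [H0 | H0 xi xi1].
- apply: shapeop_form_between => //; first exact: unitv_meancurv_dir.
  by rewrite tr_alpha [RHS]scalerA -mulrA mulfV ?mulr1.
- rewrite H0 in hRic; apply: shapeop_form_between => //.
  by rewrite tr_alpha meancurv_eq0 // mulr0 scale0r scaler0.
Qed.
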